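(* Let $T$ be a triangulation of the oriented 2-sphere (a simplicial complex) with $N+3$ vertices, and $\mathcal E_0$ a set of $2N$ edges whose complement $\bar{\mathcal E}_0$ is a cycle-rooted spanning tree with odd cycle. Order the edges with those of $\mathcal E_0$ first, write the vertex–edge incidence matrix as $R=(R_0\,|\,\tilde R_0)$ with $R_0$ the $(N+3)\times 2N$ block on $\mathcal E_0$ and $\tilde R_0$ the invertible $(N+3)\times(N+3)$ block on $\bar{\mathcal E}_0$, and set $M_0=\begin{pmatrix}\mathrm{Id}_{2N}\\-\tilde R_0^{-1}R_0\end{pmatrix}$ and $E_0=(E_{e,e'})_{e,e'\in\mathcal E_0}$. Then $E=M_0\,E_0\,M_0^T$.
   Context: $R_{v,e}=1$ if $v$ is an endpoint of $e$, else $0$. $E_{e,e'}$: if $e\neq e'$ lie in a common face whose edges in positive cyclic order are $\{a,b\},\{b,c\},\{c,a\}$, then $E_{e,e'}=-1$ if $e'$ immediately follows $e$ and $+1$ if $e'$ immediately precedes $e$; otherwise $E_{e,e'}=0$. A cycle-rooted spanning tree is a connected spanning subgraph with as many edges as vertices. *)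

From HB Require Import structures.
From mathcomp Require Import all_boot all_order all_algebra.
Set Implicit Arguments. Unset Strict Implicit. Unset Printing Implicit Defensive.
Import Order.TTheory GRing.Theory Num.Theory.

(* A (positively) oriented triangle with vertices a, b, c in positive cyclic
   order is encoded as the triple ((a,b),c).  The set F of oriented faces is
   required to be closed under cyclic rotation, so ((a,b),c) \in F means:
   {a,b,c} is a face and a -> b -> c is its positive cyclic order. *)
Notation faceset n := {set 'I_n * 'I_n * 'I_n}.

Definition tri_edges n (F : faceset n) : {set {set 'I_n}} :=
  [set [set x.1.1; x.1.2] | x in F].

(* Combinatorial triangulation of the oriented 2-sphere on vertex set 'I_n:
   a simplicial complex which is a closed, connected, coherently oriented
   combinatorial surface (every edge in exactly two triangles, inducing
   opposite orientations; every vertex link a single cycle) with Euler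
   characteristic 2. *)
Definition sphere_triangulation n (F : faceset n) : Prop :=
  (forall a b c, ((a, b), c) \in F -> [&& a != b, b != c & c != a]) /\
  (forall a b c, ((a, b), c) \in F -> ((b, c), a) \in F) /\
  (* simplicial: no two faces on the same vertex set *)
  (forall a b c, ((a, b), c) \in F -> ((b, a), c) \notin F) /\
  (forall a b c d, ((a, b), c) \in F -> ((a, b), d) \in F -> c = d) /\
  (forall a b c, ((a, b), c) \in F -> exists d, ((b, a), d) \in F) /\
  (forall v, exists b c, ((v, b), c) \in F) /\
  (* the link of every vertex is a single cycle *)
  (forall v a a', (exists c, ((v, a), c) \in F) ->
                  (exists c, ((v, a'), c) \in F) ->
                  connect (fun x y => ((v, x), y) \in F) a a') /\
  (forall u v, connect (fun x y => [exists z, ((x, y), z) \in F]) u v) /\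
  (* Euler characteristic V - E + F = 2 *)
  (n + #|F| %/ 3 = #|tri_edges F| + 2)%N.

Definition adjS n (S : {set {set 'I_n}}) : rel 'I_n :=
  fun x y => [set x; y] \in S.

(* S is (the edge set of) a cycle-rooted spanning tree whose cycle is odd:
   connected spanning subgraph with as many edges as vertices, and its
   (unique) cycle has odd length. *)
Definition crst_odd n (S : {set {set 'I_n}}) : Prop :=
  [/\ #|S| = n,
      (forall u v, connect (adjS S) u v)
    & exists c : seq 'I_n, ucycle (adjS S) c /\ odd (size c)].

Local Open Scope ring_scope.

Definition incidence (K : fieldType) n m (ed : 'I_m -> {set 'I_n})
  : 'M[K]_(n, m) := \matrix_(v, i) (v \in ed i)%:R.

Definition follows n (F : faceset n) (e e' : {set 'I_n}) : bool :=
  [exists x in F, (e == [set x.1.1; x.1.2]) && (e' == [set x.1.2; x.2])].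

Definition edgeE (K : fieldType) n m (F : faceset n) (ed : 'I_m -> {set 'I_n})
  : 'M[K]_m :=
  \matrix_(i, j)
    (if i == j then 0
     else if follows F (ed i) (ed j) then -1
     else if follows F (ed j) (ed i) then 1 else 0).

From HB Require Import structures.
From mathcomp Require Import all_boot all_order all_algebra.
From mathcomp Require Import ring.
Import Order.TTheory GRing.Theory Num.Theory.
Set Implicit Arguments. Unset Strict Implicit. Unset Printing Implicit Defensive.
Local Open Scope ring_scope.

(* The edge {a,b}
   between the faces abc and bad has E-row -[bc] - [ad] + [ca] + [db], and each
   vertex meets these four edges with cancelling signs, so E R^T = 0; as E is
   skew, also R E = 0. A vector in the left kernel of the incidence matrix of
   the cycle-rooted spanning tree changes sign along every edge, so it vanishes
   on the odd cycle and hence everywhere: that block of R is invertible. Then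
   the rows and columns of E lie in the kernel of R, the column space of M0,
   and E = M0 E0 M0^T is pure block-matrix algebra. *)

Lemma eq_set2 (T : finType) (p q r s : T) : p != q ->
  ([set p; q] == [set r; s]) = ((r == p) && (s == q)) || ((r == q) && (s == p)).
Proof.
move=> pq; apply/eqP/idP => [E|]; last first.
  by case/orP=> /andP[/eqP-> /eqP->]; rewrite // setUC.
have : p \in [set r; s] by rewrite -E set21.
have : q \in [set r; s] by rewrite -E set22.
rewrite !inE => /orP[]/eqP eq /orP[]/eqP ep; subst; rewrite ?eqxx ?orbT //.
all: by rewrite eqxx in pq.
Qed.

Lemma natr_in_set2 (R : pzSemiRingType) (T : finType) (x y v : T) : x != y ->
  (v \in [set x; y])%:R = (v == x)%:R + (v == y)%:R :> R.
Proof.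
rewrite !inE => xy; have [->|_] := eqVneq v x; last by rewrite add0r.
by rewrite (negbTE xy) addr0.
Qed.

Lemma sum_mul_natr_in (R : pzSemiRingType) (T : finType) (f : T -> R) (A : {set T}) :
  \sum_v f v * (v \in A)%:R = \sum_(v in A) f v.
Proof. by rewrite [RHS]big_mkcond; apply: eq_bigr => v _; case: (v \in A); rewrite ?mulr1 ?mulr0. Qed.

Lemma sum_eq_indicator (R : pzSemiRingType) (I T : finType) (g : I -> T) (f : T -> R) t :
  injective g -> t \in [set g i | i : I] ->
  \sum_i (g i == t)%:R * f (g i) = f t.
Proof.
move=> g_inj /imsetP[k _ ->]; rewrite (bigD1 k) //= eqxx mul1r big1 ?addr0 // => i.
by rewrite (inj_eq g_inj) => /negbTE->; rewrite mul0r.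
Qed.

Section KernelFactor.
Variables (K : comUnitRingType) (m n : nat) (R : 'M[K]_(n, m + n)) (E : 'M[K]_(m + n)).
Hypotheses (R_unit : rsubmx R \in unitmx) (ER : E *m R^T = 0) (RE : R *m E = 0).

Let M0 := col_mx 1%:M (- (invmx (rsubmx R) *m lsubmx R)).
Let P := M0 *m row_mx (1%:M : 'M_m) (0 : 'M_(m, n)).

Let one_sub_P : 1%:M - P = col_mx 0 (invmx (rsubmx R)) *m R.
Proof.
rewrite -[X in _ = _ *m X](hsubmxK R) mul_col_row mulVmx // !mul0mx /P /M0.
rewrite mul_col_row !mul1mx !mulmx0 mulmx1 (scalar_mx_block m n).
by rewrite opp_block_mx add_block_mx !subrr sub0r opprK subr0.
Qed.

Lemma kernel_mx_factor_ulsubmx : E = M0 *m ulsubmx E *m M0^T.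
Proof.
have EP : E = E *m P^T.
  apply/eqP; rewrite -subr_eq0 -{1}(mulmx1 E) -mulmxBr -trmx1 -linearB /=.
  by rewrite one_sub_P trmx_mul mulmxA ER mul0mx.
have PE : E = P *m E.
  apply/eqP; rewrite -subr_eq0 -{1}(mul1mx E) -mulmxBl one_sub_P.
  by rewrite -mulmxA RE mulmx0.
have ulE : row_mx 1%:M 0 *m E *m col_mx 1%:M 0 = ulsubmx E.
  rewrite -[in LHS](submxK E) mul_row_block mul_row_col.
  by rewrite !mul1mx !mul0mx !addr0 mulmx1 mulmx0 addr0.
rewrite {1}PE {1}EP /P trmx_mul tr_row_mx trmx1 trmx0.
by rewrite -ulE !mulmxA.
Qed.

End KernelFactor.

Section OddCycleIncidence.
Variables (K : fieldType) (n : nat) (ed : 'I_n -> {set 'I_n}).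
Hypotheses (two_neq0 : 2%:R != 0 :> K) (ed_card2 : forall i, #|ed i| = 2%N).
Let S := [set ed i | i : 'I_n].

Section LeftKernel.
Variable w : 'rV[K]_n.
Hypothesis w_ker : w *m incidence K ed = 0.

Lemma left_kernel_incidence_adj x y : adjS S x y -> w 0 y = - w 0 x.
Proof.
case/imsetP=> k _ Ek.
have xy : x != y by move: (ed_card2 k); rewrite -Ek cards2; case: (x != y).
have : (w *m incidence K ed) 0 k = 0 by rewrite w_ker mxE.
rewrite mxE (eq_bigr (fun v => w 0 v * (v \in [set x; y])%:R)); last first.
  by move=> v _; rewrite mxE Ek.
rewrite sum_mul_natr_in big_setU1 ?inE //= big_set1 => /eqP.
by rewrite addr_eq0 => /eqP->; rewrite opprK.
Qed.

Lemma left_kernel_incidence_path x p : path (adjS S) x p ->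
  w 0 (last x p) = (-1) ^+ size p * w 0 x.
Proof.
elim: p x => [|y p IHp] x /=; first by rewrite mul1r.
case/andP=> /left_kernel_incidence_adj wy /IHp->.
by rewrite wy exprS mulN1r mulrN mulNr.
Qed.

End LeftKernel.

Lemma incidence_unitmx_odd_crst : crst_odd S -> incidence K ed \in unitmx.
Proof.
case=> _ S_conn [[|x0 p] [/andP[cyc _] odd_c]] //.
rewrite -row_free_unit; apply/inj_row_free => w w_ker.
have w_x0 : w 0 x0 = 0.
  move: (left_kernel_incidence_path w_ker cyc).
  rewrite last_rcons size_rcons -signr_odd odd_c expr1 mulN1r => /eqP.
  by rewrite -addr_eq0 -mulr2n -mulr_natr mulf_eq0 (negbTE two_neq0) orbF => /eqP.
apply/rowP => j; have /connectP[q q_path ->] := S_conn x0 j.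
by rewrite mxE (left_kernel_incidence_path w_ker q_path) w_x0 mulr0.
Qed.

End OddCycleIncidence.

Section Follows.
Variables (n : nat) (F : faceset n).
Hypotheses (F_rot : forall a b c, ((a, b), c) \in F -> ((b, c), a) \in F)
  (F_apex : forall a b c d, ((a, b), c) \in F -> ((a, b), d) \in F -> c = d).
Variables (a b c d : 'I_n).
Hypotheses (ab : a != b) (abc : ((a, b), c) \in F) (bad : ((b, a), d) \in F).

Lemma follows_from_edge e :
  follows F [set a; b] e = (e == [set b; c]) || (e == [set a; d]).
Proof.
apply/existsP/orP => [[[[p q] r]] /and3P[pqr E /eqP->]|].
  move: E pqr; rewrite /= eq_set2 // => /orP[]/andP[/eqP-> /eqP->] pqr.
    by left; rewrite (F_apex pqr abc).
  by right; rewrite (F_apex pqr bad) setUC.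
case=> /eqP->; first by exists ((a, b), c); rewrite abc /= !eqxx.
by exists ((b, a), d); rewrite bad /= setUC !eqxx.
Qed.

Lemma follows_to_edge e :
  follows F e [set a; b] = (e == [set c; a]) || (e == [set d; b]).
Proof.
apply/existsP/orP => [[[[p q] r]] /and3P[pqr /eqP-> E]|].
  move: E pqr; rewrite /= eq_set2 // => /orP[]/andP[/eqP-> /eqP->] /F_rot pqr.
    by left; rewrite (F_apex pqr abc).
  by right; rewrite (F_apex pqr bad) setUC.
case=> /eqP->; first by exists ((c, a), b); rewrite (F_rot (F_rot abc)) /= !eqxx.
by exists ((d, b), a); rewrite (F_rot (F_rot bad)) /= (setUC [set b]) !eqxx.
Qed.

End Follows.

Lemma tri_edge_card2 n (F : faceset n) S :
  sphere_triangulation F -> S \in tri_edges F -> #|S| = 2%N.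
Proof.
case=> F_dist _ /imsetP[[[a b] c] abc ->] /=.
by rewrite cards2; case/and3P: (F_dist _ _ _ abc) => ->.
Qed.

Section EdgeMatrix.
Variables (K : fieldType) (n m : nat) (F : faceset n) (ed : 'I_m -> {set 'I_n}).
Hypotheses (sphF : sphere_triangulation F) (ed_inj : injective ed)
  (ed_onto : [set ed i | i : 'I_m] = tri_edges F).

Lemma face_edges_mem a b c : ((a, b), c) \in F ->
  [set b; c] \in [set ed i | i : 'I_m] /\ [set c; a] \in [set ed i | i : 'I_m].
Proof.
case: sphF => _ [F_rot _] abc; rewrite ed_onto.
have bca := F_rot _ _ _ abc; have cab := F_rot _ _ _ bca.
by split; [exact: (imset_f _ bca) | exact: (imset_f _ cab)].
Qed.

Section AroundEdge.
Variables (i : 'I_m) (a b c d : 'I_n).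
Hypotheses (ed_i : ed i = [set a; b]) (abc : ((a, b), c) \in F) (bad : ((b, a), d) \in F).

Lemma edgeE_around_edge j :
  edgeE K F ed i j = (ed j == [set c; a])%:R + (ed j == [set d; b])%:R
                   - (ed j == [set b; c])%:R - (ed j == [set a; d])%:R /\
  edgeE K F ed j i = - edgeE K F ed i j.
Proof.
case: sphF => F_dist [F_rot [F_simp [F_apex _]]].
case/and3P: (F_dist _ _ _ abc) => ab bc ca; case/and3P: (F_dist _ _ _ bad) => ba ad db.
have cd : c != d by apply: contraTneq (F_simp _ _ _ abc) => ->; rewrite bad.
rewrite !mxE -!(inj_eq ed_inj) ed_i (eq_sym [set a; b]).
rewrite (follows_from_edge F_apex ab abc bad) (follows_to_edge F_rot F_apex ab abc bad).
have neqs := (negbTE ab, negbTE ba, negbTE bc, negbTE ca, negbTE ad, negbTE db,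
  negbTE cd, negbTE (contra_neq esym bc), negbTE (contra_neq esym ca),
  negbTE (contra_neq esym ad), negbTE (contra_neq esym db), negbTE (contra_neq esym cd)).
move: (ed j) => S.
have [->|] := eqVneq S [set a; b]; first by rewrite !eq_set2 // !neqs ?eqxx /=; split; ring.
have [->|] := eqVneq S [set b; c]; first by rewrite !eq_set2 // !neqs ?eqxx /=; split; ring.
have [->|] := eqVneq S [set a; d]; first by rewrite !eq_set2 // !neqs ?eqxx /=; split; ring.
have [->|] := eqVneq S [set c; a]; first by rewrite !eq_set2 // !neqs ?eqxx /=; split; ring.
have [->|] := eqVneq S [set d; b]; first by rewrite !eq_set2 // !neqs ?eqxx /=; split; ring.
by move=> _ _ _ _ _ /=; split; ring.
Qed.

End AroundEdge.

Lemma edge_between_faces i : exists a b c d,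
  [/\ ed i = [set a; b], ((a, b), c) \in F & ((b, a), d) \in F].
Proof.
case: sphF => _ [_ [_ [_ [F_opp _]]]].
have : ed i \in tri_edges F by rewrite -ed_onto imset_f.
case/imsetP=> [[[a b] c] abc /= ->]; have [d bad] := F_opp _ _ _ abc.
by exists a, b, c, d.
Qed.

Lemma tr_edgeE : (edgeE K F ed)^T = - edgeE K F ed.
Proof.
apply/matrixP => j i; rewrite [in RHS]mxE mxE.
have [a [b [c [d [ed_i abc bad]]]]] := edge_between_faces i.
by rewrite (edgeE_around_edge ed_i abc bad j).2 opprK.
Qed.

Lemma edgeE_mul_tr_incidence : edgeE K F ed *m (incidence K ed)^T = 0.
Proof.
case: (sphF) => F_dist _.
apply/matrixP => i v; rewrite [LHS]mxE [RHS]mxE.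
have [a [b [c [d [ed_i abc bad]]]]] := edge_between_faces i.
case/and3P: (F_dist _ _ _ abc) => _ bc ca; case/and3P: (F_dist _ _ _ bad) => _ ad db.
pose f (S : {set 'I_n}) : K := (v \in S)%:R.
have sum_at S : S \in [set ed i | i : 'I_m] -> \sum_j (ed j == S)%:R * f (ed j) = f S.
  exact: sum_eq_indicator.
under eq_bigr do rewrite (edgeE_around_edge ed_i abc bad _).1 !mxE !mulrDl !mulNr.
have [ebc eca] := face_edges_mem abc; have [ead edb] := face_edges_mem bad.
rewrite !big_split !sumrN /= !sum_at //.
rewrite /f !natr_in_set2 //; ring.
Qed.

Lemma incidence_mul_edgeE : incidence K ed *m edgeE K F ed = 0.
Proof.
by apply: trmx_inj; rewrite trmx_mul tr_edgeE mulNmx edgeE_mul_tr_incidence oppr0 trmx0.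
Qed.

End EdgeMatrix.

Theorem lemma3 (K : numFieldType) (N : nat)
  (F : {set 'I_(N + 3) * 'I_(N + 3) * 'I_(N + 3)})
  (ed : 'I_(2 * N + (N + 3)) -> {set 'I_(N + 3)}) :
  sphere_triangulation F ->
  injective ed ->
  [set ed i | i : 'I_(2 * N + (N + 3))] = tri_edges F ->
  crst_odd [set ed (rshift (2 * N) i) | i : 'I_(N + 3)] ->
  let R := incidence K ed in
  let M0 := col_mx 1%:M (- (invmx (rsubmx R) *m lsubmx R)) in
  let E := edgeE K F ed in
  E = M0 *m ulsubmx E *m M0^T.
Proof.
move=> sphF ed_inj ed_onto crst R M0 E.
apply: kernel_mx_factor_ulsubmx.
- have -> : rsubmx R = incidence K (fun i => ed (rshift (2 * N) i)).
    by apply/matrixP => i j; rewrite !mxE.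
  apply: incidence_unitmx_odd_crst crst; first by rewrite pnatr_eq0.
  by move=> i; apply: tri_edge_card2 sphF _; rewrite -ed_onto imset_f.
- exact: edgeE_mul_tr_incidence.
- exact: incidence_mul_edgeE.
Qed.
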